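(* Let $p$, $q$ be distinct prime numbers, $r, s \geq 1$ integers, and $N = p^r q^s$. Let $D \in \mathbb{Z}_N^*$ be such that $D \bmod p$ is a quadratic non-residue in $\mathbb{Z}_p$ and $D \bmod q$ is a quadratic non-residue in $\mathbb{Z}_q$. Then for all $(x,y) \in \mathcal{H}_{D,\mathbb{Z}_N}$, $$(x,y)^{\otimes\, p^{r-1}(p+1)\, q^{s-1}(q+1)} \equiv (1,0) \pmod N,$$ where the power is taken with respect to $\otimes$.
   Context: For a commutative ring $R$ and $D \in R$, let $\mathcal{H}_{D,R} = \{(x,y) \in R \times R : x^2 - D y^2 = 1\}$, equipped with the product $(x,y) \otimes (w,z) = (xw + yzD,\ yw + xz)$; this is a commutative group with identity $(1,0)$. Here $\mathbb{Z}_N$ denotes the integers modulo $N$. *)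

From mathcomp Require Import all_boot all_algebra.
Set Implicit Arguments. Unset Strict Implicit. Unset Printing Implicit Defensive.
Import GRing.Theory.
Local Open Scope ring_scope.

Definition onH (R : comRingType) (D : R) (P : R * R) : Prop :=
  P.1 ^+ 2 - D * P.2 ^+ 2 = 1.

Definition hmul (R : comRingType) (D : R) (P Q : R * R) : R * R :=
  (P.1 * Q.1 + P.2 * Q.2 * D, P.2 * Q.1 + P.1 * Q.2).

Definition hpow (R : comRingType) (D : R) (P : R * R) (n : nat) : R * R :=
  iter n (hmul D P) (1, 0).

Definition qres (m a : nat) : Prop := exists x : nat, (x ^ 2 = a %[mod m])%N.

(** The map (x, y) |-> x + y w identifies [H_{D,R}] with the elements of norm
    [1] in R[w] = R[X]/(X^2 - D), and [⊗] with the ring product.  If [D] is a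
    non-residue modulo the odd prime [p], then modulo [p] the Frobenius map
    sends x + y w to x + y D^((p-1)/2) w = x - y w by Fermat and Euler's
    criterion, so (x + y w)^(p+1) = x^2 - D y^2 = 1 modulo [p].  Since
    b = 1 + p^k c implies b^p = 1 + p^(k+1) c' for k >= 1, raising further to
    the power p^(r-1) gives [1] modulo p^r.  The same holds modulo q^s and the
    two congruences combine to an equality because p^r and q^s are coprime and
    p^r q^s = 0 in Z_N. *)

From HB Require Import structures.
From mathcomp Require Import all_boot all_algebra all_field.
From mathcomp Require Import ring zify.
Set Implicit Arguments. Unset Strict Implicit. Unset Printing Implicit Defensive.
Import GRing.Theory.
Local Open Scope ring_scope.

Section Congruence.
Variable R : comPzRingType.

Definition eqmodr (m a b : R) : Prop := exists c, a = b + m * c.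

Lemma eqmodr_refl m a : eqmodr m a a.
Proof. by exists 0; ring. Qed.

Lemma eqmodr_trans m a b c : eqmodr m a b -> eqmodr m b c -> eqmodr m a c.
Proof. by case=> u -> [v ->]; exists (u + v); ring. Qed.

Lemma eqmodrD m a b a' b' :
  eqmodr m a b -> eqmodr m a' b' -> eqmodr m (a + a') (b + b').
Proof. by case=> u -> [v ->]; exists (u + v); ring. Qed.

Lemma eqmodrM m a b a' b' :
  eqmodr m a b -> eqmodr m a' b' -> eqmodr m (a * a') (b * b').
Proof. by case=> u -> [v ->]; exists (u * b' + b * v + m * u * v); ring. Qed.

Lemma eqmodrX m a b n : eqmodr m a b -> eqmodr m (a ^+ n) (b ^+ n).
Proof.
move=> ab; elim: n => [|n IHn]; first exact: eqmodr_refl.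
by rewrite !exprS; apply: eqmodrM.
Qed.

Lemma eqmodr1X m a n : eqmodr m a 1 -> eqmodr m (a ^+ n) 1.
Proof. by move/(eqmodrX n); rewrite expr1n. Qed.

Lemma eqmodr_nat m a b : (a = b %[mod m])%N -> eqmodr (m%:R : R) a%:R b%:R.
Proof.
move=> ab; exists ((a %/ m)%:R - (b %/ m)%:R).
rewrite {1}(divn_eq a m) {1}(divn_eq b m) ab !natrD !natrM; ring.
Qed.

Lemma eqmodr_frobenius p (x y : R) :
  prime p -> eqmodr p%:R ((x + y) ^+ p) (x ^+ p + y ^+ p).
Proof.
case: p => // p pr_p; rewrite exprDn big_ord_recr big_ord_recl /=.
rewrite subnn binn subn0 bin0 !mulr1n expr0 mulr1 mul1r addrAC.
exists (\sum_(i < p) x ^+ (p - i) * y ^+ i.+1 *+ ('C(p.+1, i.+1) %/ p.+1)).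
congr (_ + _); rewrite mulr_sumr; apply: eq_bigr => i _.
have dvd_bin : (p.+1 %| 'C(p.+1, i.+1))%N.
  by rewrite prime_dvd_bin //= ltnS ltn_ord.
by rewrite /bump leq0n add1n subSS mulr_natl -mulrnA divnK.
Qed.

Lemma eqmodr_fermat p a : prime p -> eqmodr (p%:R : R) (a%:R ^+ p) a%:R.
Proof.
move=> pr_p; elim: a => [|a IHa].
  by rewrite expr0n gtn_eqF ?prime_gt0 //; apply: eqmodr_refl.
rewrite -addn1 natrD; apply: eqmodr_trans (eqmodr_frobenius _ _ pr_p) _.
by rewrite expr1n; apply: eqmodrD IHa (eqmodr_refl _ _).
Qed.

Lemma exprD1n_sqr (x : R) n : exists c, (1 + x) ^+ n = 1 + n%:R * x + x ^+ 2 * c.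
Proof.
elim: n => [|n [c IHc]]; first by exists 0; ring.
by exists (n%:R + c + x * c); rewrite exprS IHc mulrS; ring.
Qed.

Lemma eqmodr_lift p k a :
  (0 < k)%N -> eqmodr (p ^ k)%:R a 1 -> eqmodr (p ^ k.+1)%:R (a ^+ p) 1.
Proof.
case: k => // k _ [c ->].
have [e ->] := exprD1n_sqr ((p ^ k.+1)%:R * c) p.
exists (c + (p ^ k)%:R * c ^+ 2 * e).
by rewrite !natrX !exprS; ring.
Qed.

Lemma eqmodr_lift_pow p k a :
  eqmodr p%:R a 1 -> eqmodr (p ^ k.+1)%:R (a ^+ (p ^ k)) 1.
Proof.
move=> a1; elim: k => [|k IHk]; first by rewrite expn1 expn0 expr1.
by rewrite [(p ^ k.+1)%N]expnSr exprM; apply: eqmodr_lift.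
Qed.

Lemma eqmodr_coprime_eq m n a b : coprime m n -> (m * n)%:R = 0 :> R ->
  eqmodr m%:R a b -> eqmodr n%:R a b -> a = b.
Proof.
have [-> _ _ [c ->] _|m_gt0 co_mn mn0 [c ->] [e ab]] := posnP m.
  by rewrite mul0r addr0.
have [u _] := Bezoutl n m_gt0; rewrite (eqP co_mn) => /dvdnP [v uv].
have one : 1 = v%:R * m%:R - u%:R * n%:R :> R.
  by rewrite -!natrM -uv natrD addrK.
have mc : m%:R * c = n%:R * e by apply: (@addrI _ b); rewrite -ab.
suff -> : m%:R * c = 0 by rewrite addr0.
transitivity ((v%:R * m%:R - u%:R * n%:R) * (m%:R * c)); first by rewrite -one mul1r.
rewrite mulrBl {1}mc.
transitivity ((v%:R * e - u%:R * c) * (m * n)%:R); first by rewrite natrM; ring.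
by rewrite mn0 mulr0.
Qed.

End Congruence.

(* [(x, y)] stands for x + y sqrt D in R[X]/(X^2 - D), whose product is [hmul D]. *)
Definition quad_ext (R : comNzRingType) (D : R) : Type := (R * R)%type.

Section QuadExt.
Variables (R : comNzRingType) (D : R).
Local Notation RD := (quad_ext D).

HB.instance Definition _ := GRing.Zmodule.on RD.

Let addE (P Q : RD) : P + Q = (P.1 + Q.1, P.2 + Q.2).
Proof. by []. Qed.

Lemma hmulA : associative (hmul D : RD -> RD -> RD).
Proof. by move=> [a b] [c d] [e f]; congr pair => /=; ring. Qed.

Lemma hmulC : commutative (hmul D : RD -> RD -> RD).
Proof. by move=> [a b] [c d]; congr pair => /=; ring. Qed.

Lemma hmul1 : left_id ((1, 0) : RD) (hmul D).
Proof. by move=> [a b]; congr pair => /=; ring. Qed.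

Lemma hmulDl : left_distributive (hmul D : RD -> RD -> RD) +%R.
Proof. by move=> [a b] [c d] [e f]; rewrite !addE; congr pair => /=; ring. Qed.

Lemma quad_ext_oner_neq0 : ((1, 0) : RD) != 0.
Proof. by apply/eqP => -[/eqP]; rewrite oner_eq0. Qed.

HB.instance Definition _ :=
  GRing.Zmodule_isComNzRing.Build RD hmulA hmulC hmul1 hmulDl quad_ext_oner_neq0.

Definition qconst (x : R) : RD := (x, 0).

Definition sqrtD : RD := (0, 1).

Definition qconj (P : RD) : RD := (P.1, - P.2).

Lemma hpowE (P : RD) n : hpow D P n = P ^+ n.
Proof. by elim: n => [|n IHn] //; rewrite exprS -IHn. Qed.

Lemma qconst_natr n : qconst n%:R = n%:R.
Proof. by elim: n => [|n IHn] //; rewrite !mulrS -IHn addE /= addr0. Qed.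

Lemma quad_ext_pairE x y : (x, y) = qconst x + qconst y * sqrtD.
Proof. by congr pair => /=; rewrite !(mulr0, mul0r, addr0, add0r, mulr1). Qed.

Lemma sqrtD_sqr : sqrtD ^+ 2 = qconst D.
Proof. by congr pair => /=; rewrite !(mulr0, mul0r, addr0, add0r, mul1r). Qed.

Lemma qconj_pairE x y : qconj (x, y) = qconst x - qconst y * sqrtD.
Proof. by congr pair => /=; rewrite !(mulr0, mul0r, addr0, add0r, mulr1, subr0, sub0r). Qed.

Lemma onH_mul_qconj (P : RD) : onH D P -> P * qconj P = 1.
Proof.
case: P => x y; rewrite /onH /= => xy1; congr pair => /=; last by ring.
by rewrite -[RHS]xy1; ring.
Qed.

End QuadExt.

Lemma Fp_natr_eq p a b : prime p ->
  ((a%:R : 'F_p) = b%:R) <-> (a = b %[mod p])%N.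
Proof.
move=> pr_p; split => [/(congr1 val) | ab]; first by rewrite /= !val_Fp_nat.
by apply: val_inj; rewrite /= !val_Fp_nat.
Qed.

Lemma qres_Fp p d x : prime p -> (x%:R : 'F_p) ^+ 2 = d%:R -> qres p d.
Proof. by move=> pr_p; rewrite -natrX => /(Fp_natr_eq _ _ pr_p); exists x. Qed.

Lemma root_mem_max_roots (F : idomainType) (q : {poly F}) (s : seq F) z :
  q != 0 -> size s = (size q).-1 -> uniq s -> all (root q) s -> root q z ->
  z \in s.
Proof.
move=> q0 size_s s_uniq s_roots qz; apply/negPn/negP => zNs.
have q_gt0 : (0 < size q)%N by rewrite size_poly_gt0.
have zs_roots : all (root q) (z :: s) by rewrite /= qz.
have zs_uniq : uniq (z :: s) by rewrite /= zNs.
by have := max_poly_roots q0 zs_roots zs_uniq; rewrite /= size_s prednK // ltnn.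
Qed.

Section EulerCriterion.
Variables (p d : nat).
Hypotheses (pr_p : prime p) (nonres : ~ qres p d).

Lemma nonres_odd : odd p.
Proof.
have [p2|//] := even_prime pr_p; case: nonres; exists d.
by rewrite p2 !modn2 oddX.
Qed.

Lemma nonres_pred_half : p.-1 = (p./2).*2.
Proof. by rewrite -[in LHS](odd_double_half p) nonres_odd. Qed.

Lemma Fp_expf_pred (x : 'F_p) : x != 0 -> x ^+ p.-1 = 1.
Proof.
move=> x0; apply: (mulIf x0); rewrite mul1r -exprSr prednK ?prime_gt0 //.
by have := expf_card x; rewrite card_Fp.
Qed.

Lemma Fp_half_root_sqr (z : 'F_p) : z ^+ p./2 = 1 -> exists x, z = x%:R ^+ 2.
Proof.
set m := p./2 => zm1.
have p_eq : p = m.*2.+1 by rewrite -nonres_pred_half prednK ?prime_gt0.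
have m_gt0 : (0 < m)%N by have := prime_gt1 pr_p; lia.
pose s := [seq (k%:R : 'F_p) ^+ 2 | k <- iota 1 m].
have s_uniq : uniq s.
  rewrite map_inj_in_uniq ?iota_uniq // => k l; rewrite !mem_iota => k_le l_le.
  move/eqP; rewrite -subr_eq0 subr_sqr mulf_eq0 subr_eq0 -natrD.
  case/orP => /eqP; first by move/(Fp_natr_eq _ _ pr_p); rewrite !modn_small; lia.
  by rewrite -[0]/(0%:R) => /(Fp_natr_eq _ _ pr_p); rewrite mod0n modn_small; lia.
have s_roots : all (root ('X^m - 1)) s.
  apply/allP => y /mapP [k]; rewrite mem_iota => k_le ->.
  rewrite /root !hornerE -exprM mulnC muln2 subr_eq0 -nonres_pred_half.
  by apply/eqP/Fp_expf_pred; rewrite -(dvdn_pcharf (pchar_Fp pr_p)); apply/negP => /dvdn_leq; lia.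
have : z \in s.
  apply: root_mem_max_roots s_uniq s_roots _.
  - by rewrite -size_poly_eq0 -polyC1 size_XnsubC.
  - by rewrite -polyC1 size_XnsubC // size_map size_iota.
  - by rewrite /root !hornerE zm1 subrr.
by case/mapP => k _ ->; exists k.
Qed.

Lemma Fp_euler_criterion : (d%:R : 'F_p) ^+ p./2 = -1.
Proof.
have d0 : (d%:R : 'F_p) != 0.
  by apply: contra_notN nonres => /eqP d0; apply: (qres_Fp (x := 0) pr_p); rewrite d0 expr0n.
have : ((d%:R : 'F_p) ^+ p./2) ^+ 2 = 1.
  by rewrite -exprM muln2 -nonres_pred_half Fp_expf_pred.
move/eqP; rewrite sqrf_eq1 => /orP [/eqP/Fp_half_root_sqr [x dx]|/eqP //].
by case: nonres; apply: (qres_Fp pr_p (esym dx)).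
Qed.

Lemma eqmodr_euler_criterion (R : comPzRingType) :
  eqmodr (p%:R : R) (d%:R ^+ p./2) (-1).
Proof.
have : (d ^ p./2 + 1 = 0 %[mod p])%N.
  by apply/(Fp_natr_eq _ _ pr_p); rewrite natrD natrX Fp_euler_criterion addNr.
move/(eqmodr_nat R)/(eqmodrD (eqmodr_refl _ (-1))).
by rewrite natrD natrX addrC addrK addr0.
Qed.

End EulerCriterion.

Section PrimePowerOrder.
Variables (R : comNzRingType) (p d a b : nat).
Hypotheses (pr_p : prime p) (nonres : ~ qres p d).
Local Notation D := (d%:R : R).
Local Notation P := ((a%:R, b%:R) : quad_ext D).

Lemma eqmodr_sqrtD_frobenius : eqmodr p%:R (sqrtD D ^+ p) (- sqrtD D).
Proof.
rewrite -[X in _ ^+ X](prednK (prime_gt0 pr_p)) exprS (nonres_pred_half pr_p nonres).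
rewrite -muln2 mulnC exprM sqrtD_sqr qconst_natr mulrC -[- _]mulN1r.
exact: eqmodrM (eqmodr_euler_criterion pr_p nonres _) (eqmodr_refl _ _).
Qed.

Lemma eqmodr_pell_frobenius : eqmodr p%:R (P ^+ p) (qconj P).
Proof.
rewrite qconj_pairE (quad_ext_pairE D) !qconst_natr -mulrN.
apply: eqmodr_trans (eqmodr_frobenius _ _ pr_p) _; rewrite exprMn.
apply: eqmodrD; first exact: eqmodr_fermat.
exact: eqmodrM (eqmodr_fermat _ _ pr_p) eqmodr_sqrtD_frobenius.
Qed.

Lemma eqmodr_pell_pow_prime_succ : onH D P -> eqmodr p%:R (P ^+ p.+1) 1.
Proof.
move=> onP; rewrite exprSr -[X in eqmodr _ _ X](onH_mul_qconj onP) mulrC.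
exact: eqmodrM (eqmodr_refl _ _) eqmodr_pell_frobenius.
Qed.

Lemma eqmodr_pell_pow_prime_power r : (0 < r)%N -> onH D P ->
  eqmodr (p ^ r)%:R (P ^+ (p ^ r.-1 * (p + 1))) 1.
Proof.
move=> r_gt0 onP; rewrite -{1}(prednK r_gt0) mulnC exprM addn1.
exact: eqmodr_lift_pow (eqmodr_pell_pow_prime_succ onP).
Qed.

End PrimePowerOrder.

Theorem mainTheorem2 (p q r s : nat) (D : 'Z_(p ^ r * q ^ s)) :
  prime p -> prime q -> p != q -> (0 < r)%N -> (0 < s)%N ->
  D \is a GRing.unit ->
  ~ qres p (nat_of_ord D) -> ~ qres q (nat_of_ord D) ->
  forall P : 'Z_(p ^ r * q ^ s) * 'Z_(p ^ r * q ^ s),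
    onH D P ->
    hpow D P (p ^ r.-1 * (p + 1) * (q ^ s.-1 * (q + 1)))%N = (1, 0).
Proof.
move=> pr_p pr_q neq_pq r_gt0 s_gt0 _ nonres_p nonres_q [a b] onP.
rewrite -[a]natr_Zp -[b]natr_Zp -[D]natr_Zp hpowE in onP *.
have N_gt1 : (1 < p ^ r * q ^ s)%N.
  rewrite (leq_trans (leq_ltn_trans r_gt0 (ltn_expl r (prime_gt1 pr_p)))) //.
  by rewrite leq_pmulr // expn_gt0 prime_gt0.
pose RD := quad_ext (D%:R : 'Z_(p ^ r * q ^ s)).
apply: (@eqmodr_coprime_eq RD (p ^ r) (q ^ s) _ 1).
- by rewrite coprimeXl // coprimeXr // prime_coprime // dvdn_prime2.
- by rewrite -qconst_natr pchar_Zp.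
- rewrite exprM; exact/eqmodr1X/eqmodr_pell_pow_prime_power.
- rewrite [(_ * (q ^ s.-1 * _))%N]mulnC exprM.
  exact/eqmodr1X/eqmodr_pell_pow_prime_power.
Qed.
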